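(* For every integer $T=6k$ with $k\ge 1$ and every $\sigma\in\mathfrak S_3$, the vector $\sigma c$ with $c=[10k-1,\,4k,\,-8k+2,\,-2k+1,\,-2k+1,\,4k]$ defines a facet of $P^T$.
   Context: For an integer $T\ge 2$, let $\Omega_T$ be the set of words $w=s_1s_2\cdots s_T$ over $\{1,2,3\}$ with $s_l\neq s_{l+1}$ for $l=1,\dots,T-1$. For $w\in\Omega_T$ and an ordered pair $ij$, $i\neq j$, let $x_{ij}(w)$ be the number of indices $1\le l\le T-1$ with $s_ls_{l+1}=ij$. Vectors of $\mathbb R^6$ are indexed in the order $[x_{12},x_{13},x_{21},x_{23},x_{31},x_{32}]$. Let $a_w=[x_{12}(w),\dots,x_{32}(w)]$ and $P^T=\mathrm{conv}\{a_w:w\in\Omega_T\}$. $\mathfrak S_3$ acts on $\mathbb R^6$ by $(\sigma c)_{ij}=c_{\sigma(i)\sigma(j)}$. A vector $c$ defines a facet of $P^T$ if $c\cdot a_w\ge0$ for all $w\in\Omega_T$ and $\{x\in P^T: c\cdot x=0\}$ is a facet of $P^T$. *)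

(* Letters 1,2,3 are encoded as 0,1,2 : 'I_3. *)
From mathcomp Require Import all_boot all_order all_algebra all_fingroup.
Set Implicit Arguments. Unset Strict Implicit. Unset Printing Implicit Defensive.
Import Order.TTheory GRing.Theory Num.Theory.
Local Open Scope ring_scope.

Section Defs.
Variable R : realFieldType.

(* a word s_1 ... s_T, stored 0-indexed *)
Definition letter {T : nat} (w : T.-tuple 'I_3) (l : nat) : 'I_3 := nth ord0 w l.

Definition valid_word {T : nat} (w : T.-tuple 'I_3) : bool :=
  all (fun l => letter w l != letter w l.+1) (iota 0 T.-1).

Definition xcount {T : nat} (w : T.-tuple 'I_3) (i j : 'I_3) : nat :=
  count (fun l => (letter w l == i) && (letter w l.+1 == j)) (iota 0 T.-1).

(* coordinate order [x12, x13, x21, x23, x31, x32] *)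
Definition pair_of (m : 'I_6) : 'I_3 * 'I_3 :=
  match val m with
  | 0 => (inord 0, inord 1)
  | 1 => (inord 0, inord 2)
  | 2 => (inord 1, inord 0)
  | 3 => (inord 1, inord 2)
  | 4 => (inord 2, inord 0)
  | _ => (inord 2, inord 1)
  end.

Definition vec_of (f : 'I_3 -> 'I_3 -> R) : 'rV[R]_6 :=
  \row_m f (pair_of m).1 (pair_of m).2.

Definition a_vec {T : nat} (w : T.-tuple 'I_3) : 'rV[R]_6 :=
  vec_of (fun i j => (xcount w i j)%:R).

Definition PT (T : nat) (x : 'rV[R]_6) : Prop :=
  exists lam : T.-tuple 'I_3 -> R,
    (forall w, 0 <= lam w) /\
    (forall w, ~~ valid_word w -> lam w = 0) /\
    \sum_w lam w = 1 /\
    x = \sum_w lam w *: a_vec w.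

Definition dotv (c x : 'rV[R]_6) : R := \sum_m c 0 m * x 0 m.

Definition affdim (S : 'rV[R]_6 -> Prop) (d : nat) : Prop :=
  exists U : 'M[R]_6,
    (forall x y, S x -> S y -> (x - y <= U)%MS) /\
    (forall V : 'M[R]_6, (forall x y, S x -> S y -> (x - y <= V)%MS) -> (U <= V)%MS) /\
    \rank U = d.

Definition defines_facet (T : nat) (c : 'rV[R]_6) : Prop :=
  (forall w : T.-tuple 'I_3, valid_word w -> 0 <= dotv c (a_vec w)) /\
  let F := fun x => PT T x /\ dotv c x = 0 in
  (exists x, F x) /\
  exists dP dF, affdim (PT T) dP /\ affdim F dF /\ dF.+1 = dP.

Definition act_pairs (s : 'S_3) (f : 'I_3 -> 'I_3 -> R) : 'I_3 -> 'I_3 -> R :=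
  fun i j => f (s i) (s j).

Definition c12 (k : nat) (i j : 'I_3) : R :=
  let kk : R := k%:R in
  match val i, val j with
  | 0, 1 => 10 * kk - 1
  | 0, 2 => 4 * kk
  | 1, 0 => - 8 * kk + 2
  | 1, 2 => - 2 * kk + 1
  | 2, 0 => - 2 * kk + 1
  | 2, 1 => 4 * kk
  | _, _ => 0
  end.

End Defs.

From mathcomp Require Import all_boot all_order all_algebra all_fingroup.
From mathcomp Require Import ring lra zify.
Import Order.TTheory GRing.Theory Num.Theory.
Local Open Scope ring_scope.
Set Implicit Arguments. Unset Strict Implicit. Unset Printing Implicit Defensive.

(* Off the diagonal, c = 4k 1 + (6k - 1) m with m = [1, 0, -2, -1, -1, 0], and
   the coordinates of every a_w sum to 6k - 1, so c . a_w = (6k - 1) (4k + m . a_w).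
   The potential h = (0, 2, 1) on the letters satisfies
   3 m_ab + 2 >= 2 (h b - h a) on every step ab, so summing over the 6k - 1 steps
   of a word gives 3 m . a_w >= -12k - 2, hence m . a_w >= -4k by integrality.
   For the dimensions, the words p (213)^(2k-2) q with short ends p, q give five
   vertex differences, four of them on the face, which together with e_12 form a
   unimodular basis whose dual basis contains 1 (normal to P^T) and m - 1
   (normal to the face). Relabelling the letters is a symmetry of P^T,
   which carries the facet of c to that of sigma c. *)

Section Steps.
Variable T : Type.

Definition steps (s : seq T) : seq (T * T) := zip s (behead s).

Lemma steps_cons2 x y s : steps [:: x, y & s] = (x, y) :: steps (y :: s).
Proof. by []. Qed.

Lemma size_steps s : size (steps s) = (size s).-1.
Proof. by rewrite size_zip size_behead; case: s => //= x s; apply/minn_idPr. Qed.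

Lemma steps_nth x0 s :
  [seq (nth x0 s l, nth x0 s l.+1) | l <- iota 0 (size s).-1] = steps s.
Proof.
elim: s => [|x [|y s] IHs] //=.
by rewrite steps_cons2 -IHs -(addn0 1%N) iotaDl -map_comp.
Qed.

Lemma steps_cat x s t : steps (x :: s ++ t) = steps (x :: s) ++ steps (last x s :: t).
Proof. by elim: s x => [|y s IHs] x //; rewrite cat_cons steps_cons2 IHs. Qed.

End Steps.

Lemma steps_map (T U : Type) (f : T -> U) (s : seq T) :
  steps (map f s) = [seq (f e.1, f e.2) | e <- steps s].
Proof. by elim: s => [|x [|y s] IHs] //=; rewrite -IHs. Qed.

Definition o0 : 'I_3 := @Ordinal 3 0 isT.
Definition o1 : 'I_3 := @Ordinal 3 1 isT.
Definition o2 : 'I_3 := @Ordinal 3 2 isT.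

Lemma pair_ofE (m : 'I_6) : pair_of m =
  match val m with
  | 0 => (o0, o1) | 1 => (o0, o2) | 2 => (o1, o0)
  | 3 => (o1, o2) | 4 => (o2, o0) | _ => (o2, o1)
  end%N.
Proof.
by rewrite /pair_of; case: (val m) => [|[|[|[|[|?]]]]]; congr pair; apply: val_inj; rewrite /= inordK.
Qed.

Definition pair_index (e : 'I_3 * 'I_3) : 'I_6 :=
  inord (match val e.1, val e.2 with
         | 0, 1 => 0 | 0, 2 => 1 | 1, 0 => 2 | 1, 2 => 3 | 2, 0 => 4 | _, _ => 5
         end)%N.

Lemma pair_ofK : cancel pair_of pair_index.
Proof.
by case=> [[|[|[|[|[|[|?]]]]]] ?] //; apply: val_inj; rewrite pair_ofE /= inordK.
Qed.

Lemma pair_indexK (e : 'I_3 * 'I_3) : e.1 != e.2 -> pair_of (pair_index e) = e.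
Proof.
case: e => [[[|[|[|?]]] ?] [[|[|[|?]]] ?]] //= _;
  by rewrite pair_ofE /= inordK //; congr pair; apply: val_inj.
Qed.

Lemma pair_of_offdiag (m : 'I_6) : (pair_of m).1 != (pair_of m).2.
Proof. by rewrite pair_ofE; case: m => [[|[|[|[|[|[|?]]]]]] ?]. Qed.

Section Vectors.
Variable R : realFieldType.
Implicit Types (c x y : 'rV[R]_6) (f : 'I_3 -> 'I_3 -> R).

Lemma vec_ofE f m : vec_of f 0 m = f (pair_of m).1 (pair_of m).2.
Proof. by rewrite mxE. Qed.

Lemma dotvC c x : dotv c x = dotv x c.
Proof. by apply: eq_bigr => m _; rewrite mulrC. Qed.

Lemma dotvDl c1 c2 x : dotv (c1 + c2) x = dotv c1 x + dotv c2 x.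
Proof. by rewrite /dotv -big_split; apply: eq_bigr => m _; rewrite mxE mulrDl. Qed.

Lemma dotvBl c1 c2 x : dotv (c1 - c2) x = dotv c1 x - dotv c2 x.
Proof. by rewrite /dotv -sumrB; apply: eq_bigr => m _; rewrite !mxE mulrBl. Qed.

Lemma dotvZl a c x : dotv (a *: c) x = a * dotv c x.
Proof. by rewrite /dotv mulr_sumr; apply: eq_bigr => m _; rewrite mxE mulrA. Qed.

Lemma dotvDr c x y : dotv c (x + y) = dotv c x + dotv c y.
Proof. by rewrite !(dotvC c) dotvDl. Qed.

Lemma dotvBr c x y : dotv c (x - y) = dotv c x - dotv c y.
Proof. by rewrite !(dotvC c) dotvBl. Qed.

Lemma dotvZr a c x : dotv c (a *: x) = a * dotv c x.
Proof. by rewrite !(dotvC c) dotvZl. Qed.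

Lemma dotv_sumr (I : Type) (r : seq I) (P : pred I) (F : I -> 'rV[R]_6) c :
  dotv c (\sum_(i <- r | P i) F i) = \sum_(i <- r | P i) dotv c (F i).
Proof.
apply: (big_morph (dotv c)) => [x y|]; first exact: dotvDr.
by rewrite /dotv big1 // => m _; rewrite mxE mulr0.
Qed.

Lemma dotv_col_perm (p : 'S_6) c x : dotv (col_perm p c) (col_perm p x) = dotv c x.
Proof.
rewrite /dotv [RHS](reindex_inj (@perm_inj _ p)).
by apply: eq_bigr => m _; rewrite !mxE.
Qed.

Definition pair_vec (e : 'I_3 * 'I_3) : 'rV[R]_6 :=
  vec_of (fun i j => ((i, j) == e)%:R).

Definition steps_vec (s : seq 'I_3) : 'rV[R]_6 := \sum_(e <- steps s) pair_vec e.

Definition valid_seq (s : seq 'I_3) : bool := all (fun e => e.1 != e.2) (steps s).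

Lemma steps_vecE s m : steps_vec s 0 m = (count (pred1 (pair_of m)) (steps s))%:R.
Proof.
rewrite summxE -sum1_count natr_sum [RHS]big_mkcond; apply: eq_bigr => e _.
by rewrite vec_ofE -surjective_pairing eq_sym /=; case: (e == _).
Qed.

Lemma steps_vec_cat z s t :
  steps_vec (z :: s ++ t) = steps_vec (z :: s) + steps_vec (last z s :: t).
Proof. by rewrite /steps_vec steps_cat big_cat. Qed.

Lemma valid_seq_cat z s t :
  valid_seq (z :: s ++ t) = valid_seq (z :: s) && valid_seq (last z s :: t).
Proof. by rewrite /valid_seq steps_cat all_cat. Qed.

Lemma valid_wordE T (w : T.-tuple 'I_3) : valid_word w = valid_seq w.
Proof. by rewrite /valid_seq -(steps_nth ord0) size_tuple all_map. Qed.

Lemma a_vecE T (w : T.-tuple 'I_3) : a_vec R w = steps_vec w.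
Proof.
apply/rowP => m; rewrite steps_vecE vec_ofE /xcount -(steps_nth ord0) size_tuple.
by rewrite count_map; congr (_ %:R); apply: eq_count => l; rewrite /= xpair_eqE.
Qed.

Lemma dotv_pair_vec f e : e.1 != e.2 -> dotv (vec_of f) (pair_vec e) = f e.1 e.2.
Proof.
move=> offdiag_e; rewrite /dotv (bigD1 (pair_index e)) //= big1 => [|m m_ne].
  by rewrite !vec_ofE pair_indexK // -surjective_pairing eqxx mulr1 addr0.
rewrite !vec_ofE -surjective_pairing; case: eqP => [pair_m|_]; last by rewrite mulr0.
by rewrite -pair_m pair_ofK eqxx in m_ne.
Qed.

Lemma dotv_steps_vec f s :
  valid_seq s -> dotv (vec_of f) (steps_vec s) = \sum_(e <- steps s) f e.1 e.2.
Proof.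
move/allP=> offdiag_s; rewrite dotv_sumr !big_seq.
by apply: eq_bigr => e /offdiag_s; apply: dotv_pair_vec.
Qed.

Definition ones : 'rV[R]_6 := vec_of (fun _ _ => 1).

Lemma dotv_ones_steps_vec s : valid_seq s -> dotv ones (steps_vec s) = (size s).-1%:R.
Proof. by move=> valid_s; rewrite dotv_steps_vec // -size_steps -sum1_size natr_sum. Qed.

Lemma PT_a_vec T (w : T.-tuple 'I_3) : valid_word w -> PT T (a_vec R w).
Proof.
move=> valid_w; exists (fun w' => (w' == w)%:R); split; [|split; [|split]].
- by move=> w'; rewrite ler0n.
- by move=> w'; case: eqP => [-> /negP[]|].
- by rewrite (bigD1 w) //= eqxx big1 ?addr0 // => w' /negPf ->.
rewrite (bigD1 w) //= eqxx scale1r big1 ?addr0 // => w' /negPf ->.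
by rewrite scale0r.
Qed.

Lemma PT_dotv T c r x :
  (forall w : T.-tuple 'I_3, valid_word w -> dotv c (a_vec R w) = r) ->
  PT T x -> dotv c x = r.
Proof.
move=> c_const [lam [lam_ge0 [lam_valid [lam_sum ->]]]].
rewrite dotv_sumr (eq_bigr (fun w => lam w * r)) => [|w _].
  by rewrite -mulr_suml lam_sum mul1r.
rewrite dotvZr; have [valid_w|invalid_w] := boolP (valid_word w); first by rewrite c_const.
by rewrite lam_valid // !mul0r.
Qed.

Lemma PT_dotv_ones T x : PT T x -> dotv ones x = T.-1%:R.
Proof.
apply: PT_dotv => w valid_w.
by rewrite a_vecE dotv_ones_steps_vec -?valid_wordE // size_tuple.
Qed.

End Vectors.

Section AffineDimension.
Variable R : realFieldType.

Lemma mulmx_pid_mx_id n r (u : 'rV[R]_n) :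
  (forall j : 'I_n, (r <= j)%N -> u 0 j = 0) -> u *m pid_mx r = u.
Proof.
move=> u_tail; apply/rowP => j; rewrite mxE (bigD1 j) //= big1 => [|i /negPf i_ne].
  by rewrite mxE eqxx /=; case: ltnP => [_|/u_tail ->]; rewrite ?mulr1 ?mul0r ?addr0.
by rewrite mxE [X in X && _]i_ne mulr0.
Qed.

Lemma row_pid_mxM n r (Q : 'M[R]_n) (i : 'I_n) :
  row i (pid_mx r *m Q) = (i < r)%:R *: row i Q.
Proof.
apply/rowP => j; rewrite !mxE (bigD1 i) //= big1 => [|k /negPf k_ne].
  by rewrite !mxE eqxx /= addr0 mulrC.
by rewrite mxE eq_sym [X in X && _]k_ne mul0r.
Qed.

Lemma affdim_basis (S : 'rV[R]_6 -> Prop) (r : nat) (Q Qi : 'M[R]_6) :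
  (r <= 6)%N -> Q *m Qi = 1%:M ->
  (forall i : 'I_6, (i < r)%N -> exists x y, [/\ S x, S y & row i Q = x - y]) ->
  (forall j : 'I_6, (r <= j)%N ->
     forall x y, S x -> S y -> dotv (col j Qi)^T (x - y) = 0) ->
  affdim S r.
Proof.
move=> r_le6 QQi rows_diff normals; have [Q_unit _] := mulmx1_unit QQi.
exists (pid_mx r *m Q); split; [|split].
- move=> x y Sx Sy.
  have -> : x - y = (x - y) *m Qi *m pid_mx r *m Q.
    rewrite mulmx_pid_mx_id; first by rewrite -mulmxA (mulmx1C QQi) mulmx1.
    move=> j r_le_j; rewrite -(normals j r_le_j x y) // dotvC mxE.
    by apply: eq_bigr => m _; rewrite !mxE.
  by rewrite -mulmxA submxMl.
- move=> V V_diffs; apply/row_subP => i; rewrite row_pid_mxM.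
  case: ltnP => [/rows_diff [x [y [Sx Sy ->]]]|_]; first by rewrite scale1r V_diffs.
  by rewrite scale0r sub0mx.
- by rewrite mxrankMfree ?row_free_unit // rank_pid_mx.
Qed.

Lemma affdim_mulmx (S S' : 'rV[R]_6 -> Prop) (N : 'M[R]_6) d :
  N \in unitmx -> (forall x, S' x <-> S (x *m N)) -> affdim S d -> affdim S' d.
Proof.
move=> N_unit S'E [U [U_diffs [U_min U_rank]]].
exists (U *m invmx N); split; [|split].
- move=> x y /S'E Sx /S'E Sy.
  by rewrite -[x - y](mulmxK N_unit) /= mulmxBl; exact: submxMr _ (U_diffs _ _ Sx Sy).
- move=> V V_diffs; rewrite -[V](mulmxK N_unit) /=; apply: submxMr _ (U_min _ _) => a b Sa Sb.
  have S'N z : S z -> S' (z *m invmx N) by move=> Sz; apply/S'E; rewrite mulmxKV.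
  rewrite -[a](mulmxKV N_unit) -[b](mulmxKV N_unit) /= -mulmxBl.
  exact: submxMr _ (V_diffs _ _ (S'N _ Sa) (S'N _ Sb)).
- by rewrite mxrankMfree // row_free_unit unitmx_inv.
Qed.

End AffineDimension.

Definition mstep (a b : 'I_3) : int :=
  match val a, val b with
  | 0, 1 => 1 | 1, 0 => -2 | 1, 2 => -1 | 2, 0 => -1 | _, _ => 0
  end.

Definition potential (a : 'I_3) : int := match val a with 0 => 0 | 1 => 2 | _ => 1 end.

Definition msum (s : seq 'I_3) : int := \sum_(e <- steps s) mstep e.1 e.2.

Lemma mstep_potential (a b : 'I_3) :
  a != b -> 2 * (potential b - potential a) <= 3 * mstep a b + 2.
Proof. by case: a => [[|[|[|?]]] ?]; case: b => [[|[|[|?]]] ?]. Qed.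

Lemma potential_bounds (a : 'I_3) : 0 <= potential a <= 2.
Proof. by case: a => [[|[|[|?]]] ?]. Qed.

Lemma msum_cons2 a b s : msum [:: a, b & s] = mstep a b + msum (b :: s).
Proof. by rewrite /msum steps_cons2 big_cons. Qed.

Lemma msum_potential z s : valid_seq (z :: s) ->
  2 * (potential (last z s) - potential z) <= 3 * msum (z :: s) + 2 * (size s)%:Z.
Proof.
elim: s z => [|y s IHs] z; first by rewrite /msum big_nil subrr.
rewrite /valid_seq steps_cons2 /= => /andP [z_ne_y valid_ys].
have := IHs y valid_ys; have := mstep_potential z_ne_y.
rewrite msum_cons2 /=; lia.
Qed.

Lemma msum_lower_bound k s : valid_seq s -> size s = (6 * k)%N -> - (4 * k%:Z) <= msum s.
Proof.
case: s => [|z s]; first by rewrite /msum big_nil => _ /= k0; lia.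
move=> /msum_potential bound /= size_s.
have := potential_bounds z; have := potential_bounds (last z s); lia.
Qed.

Section FacetInequality.
Variable R : realFieldType.

Definition mvec : 'rV[R]_6 := vec_of (fun a b => (mstep a b)%:~R).

Lemma dotv_mvec_steps_vec s : valid_seq s -> dotv mvec (steps_vec R s) = (msum s)%:~R.
Proof. by move=> valid_s; rewrite dotv_steps_vec // /msum rmorph_sum. Qed.

Lemma c12_offdiag k (a b : 'I_3) :
  a != b -> c12 R k a b = 4 * k%:R + (6 * k%:R - 1) * (mstep a b)%:~R.
Proof.
by case: a => [[|[|[|?]]] ?] //; case: b => [[|[|[|?]]] ?] //= _; rewrite /c12 /mstep /=; ring.
Qed.

Lemma c12E k : vec_of (c12 R k) = (4 * k%:R) *: ones R + (6 * k%:R - 1) *: mvec.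
Proof. by apply/rowP => m; rewrite !mxE c12_offdiag ?pair_of_offdiag // mulr1. Qed.

Lemma dotv_c12 k x :
  dotv (vec_of (c12 R k)) x = 4 * k%:R * dotv (ones R) x + (6 * k%:R - 1) * dotv mvec x.
Proof. by rewrite c12E dotvDl !dotvZl. Qed.

Lemma natr_6k_pred k : (1 <= k)%N -> (6 * k).-1%:R = 6 * k%:R - 1 :> R.
Proof. by move=> k_ge1; rewrite -subn1 natrB ?muln_gt0 // natrM. Qed.

Lemma six_k_sub1_gt0 k : (1 <= k)%N -> 0 < 6 * k%:R - 1 :> R.
Proof. move=> k_ge1; have : 1 <= k%:R :> R by rewrite ler1n. lra. Qed.

Lemma dotv_c12_a_vec k (w : (6 * k).-tuple 'I_3) : (1 <= k)%N -> valid_word w ->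
  dotv (vec_of (c12 R k)) (a_vec R w) = (6 * k%:R - 1) * (4 * k%:Z + msum w)%:~R.
Proof.
rewrite valid_wordE => k_ge1 valid_w.
rewrite dotv_c12 a_vecE dotv_ones_steps_vec // dotv_mvec_steps_vec // size_tuple.
by rewrite natr_6k_pred // rmorphD /= rmorphM /= !mulrz_nat; ring.
Qed.

Lemma c12_a_vec_ge0 k (w : (6 * k).-tuple 'I_3) : (1 <= k)%N -> valid_word w ->
  0 <= dotv (vec_of (c12 R k)) (a_vec R w).
Proof.
move=> k_ge1 valid_w; rewrite dotv_c12_a_vec // mulr_ge0 ?ler0z //.
  exact/ltW/six_k_sub1_gt0.
rewrite valid_wordE in valid_w; have := msum_lower_bound valid_w (size_tuple w); lia.
Qed.

Lemma face_dotv_mvec k x : (1 <= k)%N -> PT (6 * k) x ->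
  dotv (vec_of (c12 R k)) x = 0 -> dotv mvec x = - (4 * k%:R).
Proof.
move=> k_ge1 Px c_x.
have : (6 * k%:R - 1) * (dotv mvec x + 4 * k%:R) = 0.
  by rewrite -[RHS]c_x dotv_c12 (PT_dotv_ones Px) natr_6k_pred //; ring.
by move/eqP; rewrite mulf_eq0 gt_eqF ?six_k_sub1_gt0 //= addr_eq0 => /eqP.
Qed.

End FacetInequality.

Definition cycle_block (n : nat) : seq 'I_3 := flatten (nseq n [:: o1; o0; o2]).

Lemma size_cycle_block n : size (cycle_block n) = (3 * n)%N.
Proof. by rewrite /cycle_block; elim: n => //= n ->; rewrite mulnS. Qed.

Lemma valid_cycle_block n t : valid_seq (o2 :: cycle_block n ++ t) = valid_seq (o2 :: t).
Proof. by elim: n => //= n IHn; rewrite -catA valid_seq_cat IHn. Qed.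

Definition word k (pq : seq 'I_3 * seq 'I_3) : (6 * k).-tuple 'I_3 :=
  insubd (nseq_tuple (6 * k) o0) (pq.1 ++ cycle_block (2 * k - 2) ++ pq.2).

Definition valid_ends (pq : seq 'I_3 * seq 'I_3) : bool :=
  [&& last o0 pq.1 == o2, size pq.1 + size pq.2 == 6%N,
      valid_seq pq.1 & valid_seq (o2 :: pq.2)].

Lemma word_val k pq : (1 <= k)%N -> valid_ends pq ->
  val (word k pq) = pq.1 ++ cycle_block (2 * k - 2) ++ pq.2.
Proof.
move=> k_ge1 /and4P [_ /eqP size_pq _ _]; rewrite /word insubdK // -topredE /=.
by rewrite !size_cat size_cycle_block; apply/eqP; lia.
Qed.

Lemma valid_word_word k pq : (1 <= k)%N -> valid_ends pq -> valid_word (word k pq).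
Proof.
move=> k_ge1 valid_pq; rewrite valid_wordE word_val //.
case: pq valid_pq => [[|z p] q] /and4P [/= /eqP last_p _ valid_p valid_q] //.
by rewrite valid_seq_cat last_p valid_cycle_block valid_p.
Qed.

Section Words.
Variable R : realFieldType.

Definition ends_vec (pq : seq 'I_3 * seq 'I_3) : 'rV[R]_6 :=
  steps_vec R pq.1 + steps_vec R (o2 :: pq.2).

Lemma steps_vec_cycle_block n t :
  steps_vec R (o2 :: cycle_block n ++ t) =
  n%:R *: steps_vec R [:: o2; o1; o0; o2] + steps_vec R (o2 :: t).
Proof.
elim: n => [|n IHn]; first by rewrite scale0r add0r.
rewrite (steps_vec_cat R o2 [:: o1; o0; o2] (cycle_block n ++ t)) IHn.
by rewrite addrA mulrS scalerDl scale1r.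
Qed.

Lemma a_vec_word k pq : (1 <= k)%N -> valid_ends pq ->
  a_vec R (word k pq) = ends_vec pq + (2 * k - 2)%:R *: steps_vec R [:: o2; o1; o0; o2].
Proof.
move=> k_ge1 valid_pq; rewrite a_vecE word_val //.
case: pq valid_pq => [[|z p] q] /and4P [/= /eqP last_p _ _ _] //.
rewrite steps_vec_cat last_p steps_vec_cycle_block /ends_vec /=.
by rewrite addrA addrAC.
Qed.

Lemma dotv_c12_word k pq : (1 <= k)%N -> valid_ends pq ->
  dotv (vec_of (c12 R k)) (a_vec R (word k pq)) =
  (6 * k%:R - 1) * (msum pq.1 + msum (o2 :: pq.2) + 4)%:~R.
Proof.
move=> k_ge1 valid_pq; have /and4P [_ _ valid_p valid_q] := valid_pq.
have cycle_msum : msum [:: o2; o1; o0; o2] = -2 by rewrite /msum unlock.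
rewrite dotv_c12 (PT_dotv_ones (PT_a_vec R (valid_word_word k_ge1 valid_pq))).
rewrite a_vec_word // dotvDr dotvZr dotvDr !dotv_mvec_steps_vec // cycle_msum.
rewrite natr_6k_pred // natrB; last by lia.
by rewrite natrM !rmorphD /=; ring.
Qed.

End Words.

Section Spanning.
Variable R : realFieldType.

Definition base_ends : seq 'I_3 * seq 'I_3 := ([:: o1; o0; o2], [:: o1; o0; o2]).

(* The first four words lie on the facet, the fifth does not. *)
Definition spanning_ends : seq (seq 'I_3 * seq 'I_3) :=
  [:: ([:: o2], [:: o1; o0; o2; o1; o0]); ([:: o1; o2], [:: o0; o2; o1; o0]);
      ([:: o1; o2], [:: o1; o0; o1; o0]); ([:: o1; o0; o2], [:: o0; o1; o0]);
      ([:: o2], [:: o1; o0; o1; o0; o2])].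

Definition mx_of_seqs (rows : seq (seq R)) : 'M[R]_6 :=
  \matrix_(i, j) nth 0 (nth [::] rows i) j.

Definition diff_basis : 'M[R]_6 := mx_of_seqs
  [:: [:: 0; -1; 0; 0; 0; 1];
      [:: 0; -1; -1; 1; 1; 0];
      [:: 1; -2; 0; 1; 0; 0];
      [:: 1; -1; 0; 0; 1; -1];
      [:: 1; -1; 0; 0; 0; 0];
      [:: 1; 0; 0; 0; 0; 0]].

Definition diff_basis_inv : 'M[R]_6 := mx_of_seqs
  [:: [:: 0; 0; 0; 0; 0; 1];
      [:: 0; 0; 0; 0; -1; 1];
      [:: 1; -1; 1; 1; -3; 1];
      [:: 0; 0; 1; 0; -2; 1];
      [:: 1; 0; 0; 1; -2; 1];
      [:: 1; 0; 0; 0; -1; 1]].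

Lemma diff_basisK : diff_basis *m diff_basis_inv = 1%:M.
Proof.
apply/matrixP => i j; rewrite !mxE !big_ord_recl big_ord0 !mxE.
by case: i => [[|[|[|[|[|[|?]]]]]] ?]; case: j => [[|[|[|[|[|[|?]]]]]] ?] //=; ring.
Qed.

Lemma row_diff_basis (i : 'I_6) : (i < 5)%N ->
  row i diff_basis = ends_vec R (nth base_ends spanning_ends i) - ends_vec R base_ends.
Proof.
move=> i_lt5; apply/rowP => j; rewrite !mxE !steps_vecE pair_ofE.
by case: i i_lt5 => [[|[|[|[|[|[|?]]]]]] ?] //= _; case: j => [[|[|[|[|[|[|?]]]]]] ?] //=; ring.
Qed.

Lemma col_diff_basis_inv (j : 'I_6) : (4 <= j)%N ->
  (col j diff_basis_inv)^T = if val j == 4%N then mvec R - ones R else ones R.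
Proof.
case: j => [[|[|[|[|[|[|?]]]]]] ?] //= _; apply/rowP => m; rewrite !mxE ?pair_ofE;
  by case: m => [[|[|[|[|[|[|?]]]]]] ?] //=; unfold mstep; simpl; ring.
Qed.

End Spanning.

Section BaseFacet.
Variables (R : realFieldType) (k : nat).
Hypothesis k_ge1 : (1 <= k)%N.

Local Notation c := (vec_of (c12 R k)).
Local Notation vertex pq := (a_vec R (word k pq)).

Lemma valid_spanning_ends i : valid_ends (nth base_ends spanning_ends i).
Proof. by case: i => [|[|[|[|[|i]]]]] //; rewrite nth_default. Qed.

Lemma vertex_PT pq : valid_ends pq -> PT (6 * k) (vertex pq).
Proof. by move=> valid_pq; apply/PT_a_vec/valid_word_word. Qed.

Lemma vertex_on_face pq : valid_ends pq -> msum pq.1 + msum (o2 :: pq.2) = -4 ->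
  PT (6 * k) (vertex pq) /\ dotv c (vertex pq) = 0.
Proof.
by move=> valid_pq msum_pq; split; [exact: vertex_PT | rewrite dotv_c12_word // msum_pq mulr0].
Qed.

Lemma base_on_face : PT (6 * k) (vertex base_ends) /\ dotv c (vertex base_ends) = 0.
Proof. by apply: vertex_on_face; rewrite // /msum unlock. Qed.

Lemma row_diff_basis_vertices (i : 'I_6) : (i < 5)%N ->
  row i (diff_basis R) = vertex (nth base_ends spanning_ends i) - vertex base_ends.
Proof.
move=> i_lt5; rewrite row_diff_basis // !a_vec_word ?valid_spanning_ends //.
by rewrite [in RHS]opprD [in RHS]addrACA subrr addr0.
Qed.

Theorem c12_facet : defines_facet (6 * k) c.
Proof.
split; first by move=> w; apply: c12_a_vec_ge0.
split; first by exists (vertex base_ends); exact: base_on_face.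
exists 5%N, 4%N; split; [|split => //].
  apply: (affdim_basis (Q := diff_basis R) (Qi := diff_basis_inv R)) => //.
  - exact: diff_basisK.
  - move=> i i_lt5; exists (vertex (nth base_ends spanning_ends i)), (vertex base_ends).
    rewrite row_diff_basis_vertices //; split => //; apply: vertex_PT => //.
    exact: valid_spanning_ends.
  move=> j j_ge5 x y Px Py.
  rewrite col_diff_basis_inv 1?ltnW // gtn_eqF // dotvBr.
  by rewrite (PT_dotv_ones Px) (PT_dotv_ones Py) subrr.
apply: (affdim_basis (Q := diff_basis R) (Qi := diff_basis_inv R)) => //.
- exact: diff_basisK.
- move=> i i_lt4; exists (vertex (nth base_ends spanning_ends i)), (vertex base_ends).
  rewrite row_diff_basis_vertices 1?ltnW //; split => //; last exact: base_on_face.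
  apply: vertex_on_face; first exact: valid_spanning_ends.
  by case: i i_lt4 => [[|[|[|[|?]]]] ?] //= _; rewrite /msum unlock.
move=> j j_ge4 x y [Px cx] [Py cy].
have mx := face_dotv_mvec k_ge1 Px cx; have my := face_dotv_mvec k_ge1 Py cy.
rewrite col_diff_basis_inv // dotvBr; case: ifP => _;
  by rewrite ?dotvBl ?mx ?my (PT_dotv_ones Px) (PT_dotv_ones Py) subrr.
Qed.

End BaseFacet.

Definition relabel_index (s : 'S_3) (m : 'I_6) : 'I_6 :=
  pair_index (s (pair_of m).1, s (pair_of m).2).

Lemma pair_of_relabel (s : 'S_3) m :
  pair_of (relabel_index s m) = (s (pair_of m).1, s (pair_of m).2).
Proof. by rewrite pair_indexK //= (inj_eq perm_inj) pair_of_offdiag. Qed.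

Lemma relabel_index_inj (s : 'S_3) : injective (relabel_index s).
Proof.
move=> m1 m2 /(congr1 pair_of); rewrite !pair_of_relabel => -[/perm_inj e1 /perm_inj e2].
by apply: (can_inj pair_ofK); rewrite [pair_of m1]surjective_pairing e1 e2 -surjective_pairing.
Qed.

Definition pair_perm (s : 'S_3) : 'S_6 := perm (@relabel_index_inj s).

Lemma pair_permE (s : 'S_3) m : pair_of (pair_perm s m) = (s (pair_of m).1, s (pair_of m).2).
Proof. by rewrite permE pair_of_relabel. Qed.

Lemma pair_permV (s : 'S_3) : (pair_perm s)^-1%g = pair_perm s^-1%g.
Proof.
apply/permP => m; apply: (@perm_inj _ (pair_perm s)); rewrite permKV.
by apply: (can_inj pair_ofK); rewrite !pair_permE /= !permKV -surjective_pairing.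
Qed.

Lemma map_tuple_permK T (s : 'S_3) : cancel (@map_tuple T _ _ s) (map_tuple s^-1%g).
Proof. by move=> w; apply: val_inj; rewrite /= -map_comp (eq_map (permK s)) map_id. Qed.

Lemma map_tuple_permKV T (s : 'S_3) : cancel (@map_tuple T _ _ s^-1%g) (map_tuple s).
Proof. by rewrite -{2}(invgK s); apply: map_tuple_permK. Qed.

Lemma valid_word_map T (f : 'I_3 -> 'I_3) (w : T.-tuple 'I_3) :
  injective f -> valid_word (map_tuple f w) = valid_word w.
Proof.
move=> f_inj; rewrite !valid_wordE /valid_seq /= steps_map all_map.
by apply: eq_all => e /=; rewrite (inj_eq f_inj).
Qed.

Section Relabel.
Variable R : realFieldType.

Lemma vec_of_act (s : 'S_3) (f : 'I_3 -> 'I_3 -> R) :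
  vec_of (act_pairs s f) = col_perm (pair_perm s) (vec_of f).
Proof. by apply/rowP => m; rewrite !mxE pair_permE. Qed.

Lemma a_vec_relabel T (s : 'S_3) (w : T.-tuple 'I_3) :
  a_vec R (map_tuple s^-1%g w) = col_perm (pair_perm s) (a_vec R w).
Proof.
apply/rowP => m; rewrite !a_vecE [RHS]mxE !steps_vecE /= steps_map count_map pair_permE.
congr (_ %:R); apply: eq_count => -[x y]; case: (pair_of m) => a b.
by rewrite /= !xpair_eqE !(can2_eq (permKV s) (permK s)).
Qed.

Lemma PT_relabel T (s : 'S_3) (x : 'rV[R]_6) : PT T x -> PT T (col_perm (pair_perm s) x).
Proof.
move=> [lam [lam_ge0 [lam_valid [lam_sum ->]]]].
exists (fun w => lam (map_tuple s w)); split; [|split; [|split]].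
- by move=> w; apply: lam_ge0.
- by move=> w invalid_w; apply: lam_valid; rewrite valid_word_map //; apply: perm_inj.
- by rewrite -lam_sum [RHS](reindex_inj (can_inj (map_tuple_permK s))).
rewrite col_permE mulmx_suml [RHS](reindex_inj (can_inj (map_tuple_permK s^-1%g))).
apply: eq_bigr => w _.
by rewrite -scalemxAl -col_permE -a_vec_relabel map_tuple_permKV.
Qed.

Lemma defines_facet_relabel T (s : 'S_3) (c : 'rV[R]_6) :
  defines_facet T c -> defines_facet T (col_perm (pair_perm s) c).
Proof.
set q := pair_perm s.
move=> [c_ge0 [[x0 [Px0 cx0]] [dP [dF [affP [affF dF_dP]]]]]].
have mulq (x : 'rV[R]_6) : x *m perm_mx q = col_perm q^-1%g x by rewrite col_permE invgK.
have qK (x : 'rV[R]_6) : col_perm q (col_perm q^-1%g x) = x by rewrite -col_permM mulgV col_perm1.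
have PT_q (x : 'rV[R]_6) : PT T x <-> PT T (col_perm q^-1%g x).
  split; first by rewrite /q pair_permV; apply: PT_relabel.
  by move/(PT_relabel s); rewrite qK.
split.
  move=> w valid_w; rewrite -[w](map_tuple_permK s) a_vec_relabel dotv_col_perm.
  by apply: c_ge0; rewrite valid_word_map //; apply: perm_inj.
split; first by exists (col_perm q x0); rewrite dotv_col_perm; split => //; apply: PT_relabel.
exists dP, dF; split; [|split => //].
  apply: (affdim_mulmx (N := perm_mx q)) affP; first exact: unitmx_perm.
  by move=> x; rewrite mulq.
apply: (affdim_mulmx (N := perm_mx q)) affF; first exact: unitmx_perm.
move=> x; rewrite mulq -{2}(qK x) dotv_col_perm.
by split=> -[Px cx]; split=> //; [exact: iffLR (PT_q x) Px | exact: iffRL (PT_q x) Px].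
Qed.

End Relabel.

Theorem proposition12 (R : realFieldType) (k : nat) (s : 'S_3) :
  (1 <= k)%N ->
  defines_facet (6 * k) (vec_of (act_pairs s (c12 R k))).
Proof.
by move=> k_ge1; rewrite vec_of_act; apply: defines_facet_relabel; apply: c12_facet.
Qed.
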